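(* Let $b>1$ and consider on $M_h$ with $2h=1$ the reduced prolate integrable system $(\ell_{23},G_{pro})$, where $G_{pro}=b\ell_{12}^2+b\ell_{13}^2+\ell_{14}^2$. The image of the momentum map $(\ell_{23},G_{pro}):M_h\to\mathbb R^2$ is the region bounded by the curve $\mathcal P_1: G_{pro}=b(1-\ell_{23}^2)$ and the line $\mathcal P_2: G_{pro}=0$. There is an isolated critical value at $(\ell_{23},G_{pro})=(0,1)$.
   Context: $\mathbf L=(\ell_{12},\ell_{13},\ell_{14},\ell_{23},\ell_{24},\ell_{34})\in\mathbb R^6\cong\mathfrak{so}(4)^*$ with the Lie–Poisson bracket of $\mathfrak{so}(4)$ (extending $\ell_{ji}=-\ell_{ij}$: $\{\ell_{ij},\ell_{jk}\}=-\ell_{ik}$ for distinct $i,j,k$, and $\{\ell_{ij},\ell_{kl}\}=0$ when $\{i,j\}\cap\{k,l\}=\emptyset$); equivalently $\ell_{ij}=x_iy_j-x_jy_i$ with canonical bracket on $T^*\mathbb R^4$. $M_h=\{\mathbf L:\sum_{i<j}\ell_{ij}^2=2h,\ \ell_{12}\ell_{34}-\ell_{13}\ell_{24}+\ell_{14}\ell_{23}=0\}\cong S^2\times S^2$ is a symplectic leaf. This system arises from separating the geodesic flow on $S^3$ in prolate coordinates (ellipsoidal parameters $(0,1,1,b)$). *)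

From Stdlib Require Import Reals.
From Coquelicot Require Import Coquelicot.
Open Scope R_scope.

(* A point L = (l12, l13, l14, l23, l24, l34) of R^6 = so(4)^*. *)
Record L6 := mkL6 { l12 : R; l13 : R; l14 : R; l23 : R; l24 : R; l34 : R }.

Definition Lline (p v : L6) (t : R) : L6 :=
  mkL6 (l12 p + t * l12 v) (l13 p + t * l13 v) (l14 p + t * l14 v)
       (l23 p + t * l23 v) (l24 p + t * l24 v) (l34 p + t * l34 v).

Definition ddir (f : L6 -> R) (p v : L6) : R := Derive (fun t => f (Lline p v t)) 0.

Definition Cas1 (L : L6) : R :=
  l12 L ^ 2 + l13 L ^ 2 + l14 L ^ 2 + l23 L ^ 2 + l24 L ^ 2 + l34 L ^ 2.
Definition Cas2 (L : L6) : R :=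
  l12 L * l34 L - l13 L * l24 L + l14 L * l23 L.

Definition M_h (h : R) (L : L6) : Prop := Cas1 L = 2 * h /\ Cas2 L = 0.

Definition G_pro (b : R) (L : L6) : R :=
  b * l12 L ^ 2 + b * l13 L ^ 2 + l14 L ^ 2.

Definition tangent_Mh (p v : L6) : Prop := ddir Cas1 p v = 0 /\ ddir Cas2 p v = 0.

(* p is a critical point of the momentum map F = (l23, G_pro) restricted to M_h:
   p lies on M_h and dF_p restricted to T_p M_h has rank < 2, i.e. some nontrivial
   linear combination of d l23 and d G_pro vanishes on T_p M_h. *)
Definition critical_point (b h : R) (p : L6) : Prop :=
  M_h h p /\
  exists a c : R, (a <> 0 \/ c <> 0) /\
    forall v : L6, tangent_Mh p v -> a * ddir l23 p v + c * ddir (G_pro b) p v = 0.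

Definition critical_value (b h x g : R) : Prop :=
  exists p : L6, critical_point b h p /\ l23 p = x /\ G_pro b p = g.

(* On the leaf, [Cas1 p = 1] and [Cas2 p = 0] say that [p] and its Hodge dual [hodge p]
   (the gradients of [Cas1 / 2] and [Cas2]) are orthonormal, so the tangent space is
   their orthogonal complement.  The image is the region [0 <= G <= b (1 - l23^2)]
   because [G_pro <= b (l12^2 + l13^2 + l14^2) <= b (1 - l23^2)], and every such value
   is attained on the plane [l12 = l14 = l24 = 0].
   At a critical point the covector [a dl23 + c dG_pro] is normal, hence equal to
   [lam p + mu (hodge p)].  This linear system splits into 2x2 blocks for
   [(l12, l34)] and [(l13, -l24)] with determinant [lam (2cb - lam) + mu^2]; if it is
   nonzero the point lies in the [(l14, l23)]-plane, so [G = 0] or [(l23, G) = (0, 1)];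
   if it vanishes then [b > 1] forces [mu = 0] and the point lies on [G = 0] or
   [G = b (1 - l23^2)].  Both curves stay at distance [(b - 1) / (2b)] from [(0, 1)]. *)

From Stdlib Require Import Reals Lra Psatz.
From Coquelicot Require Import Coquelicot.
Open Scope R_scope.

Definition dotL (p v : L6) : R :=
  l12 p * l12 v + l13 p * l13 v + l14 p * l14 v
  + l23 p * l23 v + l24 p * l24 v + l34 p * l34 v.

Definition L0 : L6 := mkL6 0 0 0 0 0 0.

Definition hodge (p : L6) : L6 :=
  mkL6 (l34 p) (- l24 p) (l23 p) (l14 p) (- l13 p) (l12 p).

Definition tangent_part (p u : L6) : L6 :=
  Lline (Lline u p (- dotL u p)) (hodge p) (- dotL u (hodge p)).

Definition momentum_covector (b a c : R) (p : L6) : L6 :=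
  mkL6 (2 * c * b * l12 p) (2 * c * b * l13 p) (2 * c * l14 p) a 0 0.

Lemma Rmult_eq0_reg_l (r x : R) : r <> 0 -> r * x = 0 -> x = 0.
Proof. intros Hr Hrx; destruct (Rmult_integral _ _ Hrx); [contradiction | assumption]. Qed.

Lemma dotL_self_eq0 (u : L6) : dotL u u = 0 -> u = L0.
Proof.
  destruct u as [u1 u2 u3 u4 u5 u6]; unfold dotL, L0; cbn; intros H.
  assert (u1 = 0 /\ u2 = 0 /\ u3 = 0 /\ u4 = 0 /\ u5 = 0 /\ u6 = 0)
    as (-> & -> & -> & -> & -> & ->) by (repeat split; nra).
  reflexivity.
Qed.

Lemma dotL_comm (u v : L6) : dotL u v = dotL v u.
Proof. unfold dotL; ring. Qed.

Lemma dotL_self_Cas1 (p : L6) : dotL p p = Cas1 p.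
Proof. unfold dotL, Cas1; ring. Qed.

Lemma dotL_hodge_self (p : L6) : dotL (hodge p) (hodge p) = Cas1 p.
Proof. unfold dotL, hodge, Cas1; cbn; ring. Qed.

Lemma dotL_hodge (p : L6) : dotL p (hodge p) = 2 * Cas2 p.
Proof. unfold dotL, hodge, Cas2; cbn; ring. Qed.

Lemma ddir_Cas1 (p v : L6) : ddir Cas1 p v = 2 * dotL p v.
Proof.
  apply is_derive_unique; unfold Cas1, Lline, dotL; cbn.
  auto_derive; [easy | ring].
Qed.

Lemma ddir_Cas2 (p v : L6) : ddir Cas2 p v = dotL (hodge p) v.
Proof.
  apply is_derive_unique; unfold Cas2, Lline, dotL, hodge; cbn.
  auto_derive; [easy | ring].
Qed.

Lemma ddir_l23 (p v : L6) : ddir l23 p v = l23 v.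
Proof.
  apply is_derive_unique; unfold Lline; cbn.
  auto_derive; [easy | ring].
Qed.

Lemma ddir_G_pro (b : R) (p v : L6) :
  ddir (G_pro b) p v = 2 * b * l12 p * l12 v + 2 * b * l13 p * l13 v + 2 * l14 p * l14 v.
Proof.
  apply is_derive_unique; unfold G_pro, Lline; cbn.
  auto_derive; [easy | ring].
Qed.

Lemma ddir_momentum_comb (b a c : R) (p v : L6) :
  a * ddir l23 p v + c * ddir (G_pro b) p v = dotL (momentum_covector b a c p) v.
Proof. rewrite ddir_l23, ddir_G_pro; unfold dotL, momentum_covector; cbn; ring. Qed.

Lemma dotL_tangent_part (p w u : L6) :
  dotL w (tangent_part p u) = dotL w u - dotL u p * dotL w p - dotL u (hodge p) * dotL w (hodge p).
Proof. unfold tangent_part, Lline, hodge, dotL; cbn; ring. Qed.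

Section UnitLeaf.

Variable p : L6.
Hypotheses (Hcas1 : Cas1 p = 1) (Hcas2 : Cas2 p = 0).

Lemma tangent_Mh_tangent_part (u : L6) : tangent_Mh p (tangent_part p u).
Proof.
  split; rewrite ?ddir_Cas1, ?ddir_Cas2, dotL_tangent_part, (dotL_comm _ u).
  - rewrite dotL_self_Cas1, dotL_hodge, Hcas1, Hcas2; ring.
  - rewrite dotL_hodge_self, (dotL_comm (hodge p)), dotL_hodge, Hcas1, Hcas2; ring.
Qed.

Lemma dotL_tangent_part_self (w : L6) :
  dotL (tangent_part p w) (tangent_part p w) = dotL w (tangent_part p w).
Proof.
  rewrite dotL_tangent_part, !(dotL_comm (tangent_part p w)), !dotL_tangent_part.
  rewrite (dotL_self_Cas1 p), dotL_hodge_self, dotL_hodge, (dotL_comm (hodge p) p), dotL_hodge.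
  rewrite Hcas1, Hcas2, (dotL_comm p w), (dotL_comm (hodge p) w); ring.
Qed.

Lemma annihilator_tangent_normal (w : L6) :
  (forall v, tangent_Mh p v -> dotL w v = 0) -> tangent_part p w = L0.
Proof.
  intros Hw; apply dotL_self_eq0.
  rewrite dotL_tangent_part_self; apply Hw, tangent_Mh_tangent_part.
Qed.

End UnitLeaf.

Lemma G_pro_on_l14_l23_plane (b : R) (p : L6) :
  Cas1 p = 1 -> Cas2 p = 0 -> l12 p = 0 -> l13 p = 0 -> l24 p = 0 -> l34 p = 0 ->
  G_pro b p = 0 \/ (l23 p = 0 /\ G_pro b p = 1).
Proof.
  unfold Cas1, Cas2, G_pro; intros H1 H2 H12 H13 H24 H34.
  rewrite H12, H13, H24, H34 in *.
  assert (H : l14 p * l23 p = 0) by lra.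
  destruct (Rmult_integral _ _ H) as [H14 | H23]; [left | right]; nra.
Qed.

Lemma linear2_kernel_trivial (k lam mu x y : R) :
  k * x = mu * y -> lam * y = - (mu * x) -> lam * k + mu ^ 2 <> 0 -> x = 0 /\ y = 0.
Proof.
  intros Hx Hy Hdet; split; apply (Rmult_eq0_reg_l _ _ Hdet).
  - transitivity (lam * (k * x) + mu ^ 2 * x); [ring | rewrite Hx].
    transitivity (mu * (lam * y) + mu ^ 2 * x); [ring | rewrite Hy; ring].
  - transitivity (k * (lam * y) + mu ^ 2 * y); [ring | rewrite Hy].
    transitivity (- (mu * (k * x)) + mu ^ 2 * y); [ring | rewrite Hx; ring].
Qed.

Section LagrangeSystem.

(* Stationarity [a dl23 + c dG_pro = lam p + mu (hodge p)] on the tangent-normal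
   splitting, written coordinatewise; [lam], [mu] are the Lagrange multipliers of
   [Cas1 / 2] and [Cas2]. *)
Variables (b a c lam mu : R) (p : L6).
Hypotheses (hb : 1 < b) (Hcas1 : Cas1 p = 1) (Hcas2 : Cas2 p = 0) (Hac : a <> 0 \/ c <> 0).
Hypotheses
  (E12 : 2 * c * b * l12 p = lam * l12 p + mu * l34 p)
  (E13 : 2 * c * b * l13 p = lam * l13 p - mu * l24 p)
  (E14 : 2 * c * l14 p = lam * l14 p + mu * l23 p)
  (E23 : a = lam * l23 p + mu * l14 p)
  (E24 : 0 = lam * l24 p - mu * l13 p)
  (E34 : 0 = lam * l34 p + mu * l12 p).

Let k := 2 * c * b - lam.

Lemma lagrange_mu_Cas2 : k * (l12 p ^ 2 + l13 p ^ 2) + (2 * c - lam) * l14 p ^ 2 = 0.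
Proof.
  replace (k * (l12 p ^ 2 + l13 p ^ 2) + (2 * c - lam) * l14 p ^ 2)
    with (l12 p * (k * l12 p) + l13 p * (k * l13 p) + l14 p * ((2 * c - lam) * l14 p))
    by ring.
  replace (k * l12 p) with (mu * l34 p) by (unfold k; lra).
  replace (k * l13 p) with (- (mu * l24 p)) by (unfold k; lra).
  replace ((2 * c - lam) * l14 p) with (mu * l23 p) by lra.
  transitivity (mu * Cas2 p); [unfold Cas2; ring | rewrite Hcas2; ring].
Qed.

Lemma lagrange_det_neq0 : mu <> 0 -> lam * k + mu ^ 2 <> 0.
Proof.
  intros Hmu Hdet.
  assert (Hmu2 : 0 < mu ^ 2) by (apply pow2_gt_0; exact Hmu).
  assert (Hdiag : lam * (2 * c - lam) < 0).
  { assert (b * (lam * (2 * c - lam)) = - ((b - 1) * lam ^ 2) - mu ^ 2)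
      by (unfold k in Hdet; nra).
    nra. }
  assert (Hsum : mu ^ 2 * (l12 p ^ 2 + l13 p ^ 2) = lam * (2 * c - lam) * l14 p ^ 2).
  { replace (mu ^ 2) with (- (lam * k)) by lra.
    transitivity (lam * (2 * c - lam) * l14 p ^ 2
                  - lam * (k * (l12 p ^ 2 + l13 p ^ 2) + (2 * c - lam) * l14 p ^ 2));
      [ring | rewrite lagrange_mu_Cas2; ring]. }
  assert (H14 : l14 p = 0).
  { assert (0 <= lam * (2 * c - lam) * l14 p ^ 2)
      by (rewrite <- Hsum; apply Rmult_le_pos; nra).
    assert (l14 p ^ 2 <= 0) by nra. nra. }
  rewrite H14, pow_i, Rmult_0_r in Hsum by lia.
  assert (H1213 : l12 p ^ 2 + l13 p ^ 2 = 0) by (apply (Rmult_eq0_reg_l (mu ^ 2)); lra).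
  assert (H12 : l12 p = 0) by nra.
  assert (H13 : l13 p = 0) by nra.
  rewrite H12, H13, H14 in *.
  assert (l23 p = 0) by (apply (Rmult_eq0_reg_l mu); lra).
  assert (l24 p = 0) by (apply (Rmult_eq0_reg_l mu); lra).
  assert (l34 p = 0) by (apply (Rmult_eq0_reg_l mu); lra).
  unfold Cas1 in Hcas1; nra.
Qed.

Lemma lagrange_off_block_zero :
  lam * k + mu ^ 2 <> 0 -> l12 p = 0 /\ l13 p = 0 /\ l24 p = 0 /\ l34 p = 0.
Proof.
  intros Hdet.
  destruct (linear2_kernel_trivial k lam mu (l12 p) (l34 p)) as [H12 H34];
    [unfold k; lra | lra | exact Hdet |].
  destruct (linear2_kernel_trivial k lam mu (l13 p) (- l24 p)) as [H13 H24];
    [unfold k; lra | lra | exact Hdet |].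
  repeat split; lra.
Qed.

Lemma lagrange_mu0 :
  mu = 0 -> lam * k = 0 -> G_pro b p = 0 \/ G_pro b p = b * (1 - l23 p ^ 2).
Proof.
  intros Hmu Hlk; rewrite Hmu in *.
  assert (Hc : c <> 0) by (intros ->; unfold k in Hlk; destruct Hac; nra).
  unfold G_pro; unfold Cas1 in Hcas1.
  destruct (Rmult_integral _ _ Hlk) as [Hlam | Hk]; [left | right].
  - rewrite Hlam in *.
    assert (Hcb : 2 * c * b <> 0) by (apply Rmult_integral_contrapositive; split; lra).
    assert (l12 p = 0) by (apply (Rmult_eq0_reg_l _ _ Hcb); lra).
    assert (l13 p = 0) by (apply (Rmult_eq0_reg_l _ _ Hcb); lra).
    assert (l14 p = 0) by (apply (Rmult_eq0_reg_l (2 * c)); lra).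
    nra.
  - assert (Hlam : lam <> 0) by (unfold k in Hk; intros ->; nra).
    assert (H24 : l24 p = 0) by (apply (Rmult_eq0_reg_l _ _ Hlam); lra).
    assert (H34 : l34 p = 0) by (apply (Rmult_eq0_reg_l _ _ Hlam); lra).
    assert (H14 : l14 p = 0)
      by (apply (Rmult_eq0_reg_l (2 * c * (1 - b))); unfold k in Hk; nra).
    rewrite H14, H24, H34 in *.
    replace (1 - l23 p ^ 2) with (l12 p ^ 2 + l13 p ^ 2) by lra; ring.
Qed.

Lemma lagrange_curves :
  (G_pro b p = 0 \/ G_pro b p = b * (1 - l23 p ^ 2)) \/ (l23 p = 0 /\ G_pro b p = 1).
Proof.
  destruct (Req_dec (lam * k + mu ^ 2) 0) as [Hdet | Hdet].
  - destruct (Req_dec mu 0) as [Hmu | Hmu]; [| exfalso; exact (lagrange_det_neq0 Hmu Hdet)].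
    rewrite Hmu, pow_i, Rplus_0_r in Hdet by lia.
    left; exact (lagrange_mu0 Hmu Hdet).
  - destruct (lagrange_off_block_zero Hdet) as (H12 & H13 & H24 & H34).
    destruct (G_pro_on_l14_l23_plane b p); tauto.
Qed.

End LagrangeSystem.

Lemma critical_point_curves (b : R) (p : L6) : 1 < b -> critical_point b (1/2) p ->
  (G_pro b p = 0 \/ G_pro b p = b * (1 - l23 p ^ 2)) \/ (l23 p = 0 /\ G_pro b p = 1).
Proof.
  intros hb [[Hcas1 Hcas2] (a & c & Hac & Hcrit)].
  replace (2 * (1 / 2)) with 1 in Hcas1 by field.
  set (w := momentum_covector b a c p).
  assert (Hnormal : tangent_part p w = L0).
  { apply annihilator_tangent_normal; [exact Hcas1 | exact Hcas2 |].
    intros v Hv; unfold w; rewrite <- ddir_momentum_comb; exact (Hcrit v Hv). }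
  unfold tangent_part, Lline, L0 in Hnormal; injection Hnormal.
  set (lam := dotL w p); set (mu := dotL w (hodge p)).
  unfold w, momentum_covector, hodge; cbn; intros E12 E13 E14 E23 E24 E34.
  apply (lagrange_curves b a c lam mu); (assumption || lra).
Qed.

Lemma critical_point_e14 (b : R) : critical_point b (1/2) (mkL6 0 0 1 0 0 0).
Proof.
  split; [unfold M_h, Cas1, Cas2; cbn; split; field |].
  exists 0, 1; split; [right; lra |].
  intros v [Hv _]; rewrite ddir_Cas1 in Hv; rewrite ddir_l23, ddir_G_pro.
  unfold dotL in Hv; cbn in *; lra.
Qed.

Lemma M_h_momentum_bounds (b : R) (L : L6) : 1 < b -> M_h (1/2) L ->
  -1 <= l23 L <= 1 /\ 0 <= G_pro b L <= b * (1 - l23 L ^ 2).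
Proof.
  unfold M_h, Cas1, G_pro; intros hb [H1 _].
  assert (0 <= l12 L ^ 2) by apply pow2_ge_0. assert (0 <= l13 L ^ 2) by apply pow2_ge_0.
  assert (0 <= l14 L ^ 2) by apply pow2_ge_0. assert (0 <= l23 L ^ 2) by apply pow2_ge_0.
  assert (0 <= l24 L ^ 2) by apply pow2_ge_0. assert (0 <= l34 L ^ 2) by apply pow2_ge_0.
  split; split; nra.
Qed.

Lemma momentum_region_attained (b x g : R) : 1 < b ->
  -1 <= x <= 1 -> 0 <= g <= b * (1 - x ^ 2) ->
  exists L : L6, M_h (1/2) L /\ l23 L = x /\ G_pro b L = g.
Proof.
  intros hb Hx Hg.
  assert (0 <= g / b) by (apply Rdiv_le_0_compat; lra).
  assert (g / b <= 1 - x ^ 2)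
    by (apply Rmult_le_reg_l with b; [lra |]; field_simplify; lra).
  exists (mkL6 0 (sqrt (g / b)) 0 x 0 (sqrt (1 - x ^ 2 - g / b))).
  unfold M_h, Cas1, Cas2, G_pro; cbn [l12 l13 l14 l23 l24 l34].
  rewrite !pow2_sqrt by lra.
  repeat split; field; lra.
Qed.

Lemma P1_P2_far_from_01 (b x g : R) : 1 < b -> g = 0 \/ g = b * (1 - x ^ 2) ->
  ((b - 1) / (2 * b)) ^ 2 <= x ^ 2 + (g - 1) ^ 2.
Proof.
  intros hb Hg; set (eps := (b - 1) / (2 * b)).
  assert (Hbeps : b * eps = (b - 1) / 2) by (unfold eps; field; lra).
  assert (Heps0 : 0 < eps) by (unfold eps; apply Rdiv_lt_0_compat; lra).
  clearbody eps.
  assert (Heps : eps < 1 / 2) by (apply Rmult_lt_reg_l with b; lra).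
  assert (0 <= x ^ 2) by apply pow2_ge_0.
  assert (0 <= (g - 1) ^ 2) by apply pow2_ge_0.
  destruct (Rle_or_lt (eps ^ 2) (x ^ 2)) as [Hx | Hx]; [lra |].
  destruct Hg as [-> | ->]; [nra |].
  assert (b * x ^ 2 < (b - 1) / 2 * eps) by nra.
  nra.
Qed.

Theorem proposition4 (b : R) (hb : 1 < b) :
  (* image of the momentum map (l23, G_pro) on M_h, 2h = 1: the closed region
     bounded by P1 : G = b (1 - l23^2) and P2 : G = 0 *)
  (forall x g : R,
     (exists L : L6, M_h (1/2) L /\ l23 L = x /\ G_pro b L = g) <->
     (-1 <= x <= 1 /\ 0 <= g <= b * (1 - x ^ 2)))
  /\
  (* (0,1) is an isolated critical value *)
  (critical_value b (1/2) 0 1 /\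
   exists eps : R, 0 < eps /\
     forall x g : R, critical_value b (1/2) x g ->
       (x - 0) ^ 2 + (g - 1) ^ 2 < eps ^ 2 -> x = 0 /\ g = 1).
Proof.
  split; [| split].
  - intros x g; split.
    + intros (L & HL & <- & <-); exact (M_h_momentum_bounds b L hb HL).
    + intros [Hx Hg]; exact (momentum_region_attained b x g hb Hx Hg).
  - exists (mkL6 0 0 1 0 0 0); split; [apply critical_point_e14 | unfold G_pro; cbn; split; ring].
  - exists ((b - 1) / (2 * b)); split; [apply Rdiv_lt_0_compat; lra |].
    intros x g (p & Hp & <- & <-) Hnear.
    destruct (critical_point_curves b p hb Hp) as [Hcurve | Hpt]; [exfalso | exact Hpt].
    pose proof (P1_P2_far_from_01 b (l23 p) (G_pro b p) hb Hcurve); lra.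
Qed.
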